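(* Let $n\ge2$, $\alpha=n-2$ and $l,m\in\mathbb Z_{\ge0}$. Then $$h_n\bigl(R^{(\alpha)}_{l,m}(z_n,w_n;q^2)^*\,R^{(\alpha)}_{l,m}(z_n,w_n;q^2)\bigr)=c^{(\alpha)}_{l,m}:=\frac{(1-q^{2(\alpha+1)})q^{2m(\alpha+1)}}{1-q^{2(\alpha+l+m+1)}}\cdot\frac{(q^2;q^2)_l(q^2;q^2)_m}{(q^{2(\alpha+1)};q^2)_l(q^{2(\alpha+1)};q^2)_m}.$$
   Context: Fix $0<q<1$, $n\ge2$. $\mathcal Z_n$ is the unital complex $*$-algebra generated by $z_1,\dots,z_n,w_1,\dots,w_n$ subject to $z_iz_j=qz_jz_i$ $(i<j)$, $w_jw_i=qw_iw_j$ $(i<j)$, $w_iz_j=qz_jw_i$ $(i\ne j)$, $w_iz_i=z_iw_i+(1-q^2)\sum_{k<i}z_kw_k$, with involution $z_i^*=w_i$. $z^\lambda w^\mu=z_1^{\lambda_1}\cdots z_n^{\lambda_n}w_n^{\mu_n}\cdots w_1^{\mu_1}$, $|\lambda|=\sum\lambda_i$, $Q_i=\sum_{k=1}^iz_kw_k$; $Q_n$ is central and $\widetilde{\mathcal Z}_n=\mathcal Z_n/(Q_n-1)$. $(a;p)_k=\prod_{j=0}^{k-1}(1-ap^j)$. $h_n$ is the linear functional on $\widetilde{\mathcal Z}_n$ with $h_n(z^\lambda w^\mu)=\delta_{\lambda\mu}q^{-2((n-1)\lambda_1+(n-2)\lambda_2+\cdots+\lambda_{n-1})}\frac{(q^{-2};q^{-2})_{\lambda_1}\cdots(q^{-2};q^{-2})_{\lambda_n}(q^{-2};q^{-2})_{n-1}}{(q^{-2};q^{-2})_{|\lambda|+n-1}}$.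 Little $q$-Jacobi: $P^{(\alpha,\beta)}_m(x;p)=\sum_{k=0}^m\frac{(p^{-m};p)_k(p^{\alpha+\beta+m+1};p)_k}{(p^{\alpha+1};p)_k(p;p)_k}(px)^k$. $q$-disk polynomials in $\widetilde{\mathcal Z}_n$: $R^{(\alpha)}_{l,m}(z_n,w_n;q^2)=z_n^{l-m}P^{(\alpha,l-m)}_m(Q_{n-1};q^2)$ if $l\ge m$ and $=P^{(\alpha,m-l)}_l(Q_{n-1};q^2)w_n^{m-l}$ if $l\le m$. *)

From HB Require Import structures.
From mathcomp Require Import all_boot all_order all_algebra.
Set Implicit Arguments. Unset Strict Implicit. Unset Printing Implicit Defensive.
Import Order.TTheory GRing.Theory Num.Theory.
Local Open Scope ring_scope.

Section Defs.
Variable C : numClosedFieldType.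

Definition qpoch (a p : C) (k : nat) : C := \prod_(j < k) (1 - a * p ^+ j).

Variable A : lalgType C.

Definition little_qJacobi (alpha beta m : nat) (p : C) (x : A) : A :=
  \sum_(k < m.+1)
     ((qpoch (p ^- m) p k * qpoch (p ^+ (alpha + beta + m + 1)) p k)
        / (qpoch (p ^+ (alpha + 1)) p k * qpoch p p k) * p ^+ k) *: x ^+ k.

(* generators are indexed 0..n-1 (paper: 1..n) *)
Variables (n : nat) (q : C) (z w : nat -> A) (star : A -> A).

(* Q_i = sum_{k=1}^i z_k w_k  (paper index i; here sum over k < i, 0-based) *)
Definition Qsum (i : nat) : A := \sum_(k < n | (k < i)%N) z k * w k.

Definition tZn_structure : Prop :=
  [/\ (forall i j, (i < j < n)%N -> z i * z j = q *: (z j * z i)),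
      (forall i j, (i < j < n)%N -> w j * w i = q *: (w i * w j)),
      (forall i j, (i < n)%N -> (j < n)%N -> i <> j -> w i * z j = q *: (z j * w i)),
      (forall i, (i < n)%N -> w i * z i = z i * w i + (1 - q ^+ 2) *: Qsum i) &
      Qsum n = 1]
  /\ [/\ (forall i, (i < n)%N -> star (z i) = w i),
          (forall x y, star (x + y) = star x + star y),
          (forall (a : C) x, star (a *: x) = Num.conj a *: star x),
          (forall x y, star (x * y) = star y * star x) &
          (forall x, star (star x) = x)].

Definition zw_mon (lam mu : nat -> nat) : A :=
  (\prod_(i < n) z i ^+ lam i) * (\prod_(i < n) w (n.-1 - i)%N ^+ mu (n.-1 - i)%N).

Definition h_value (lam mu : nat -> nat) : C :=
  if [forall i : 'I_n, lam i == mu i] then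
    q ^- (2 * \sum_(i < n) (n.-1 - i) * lam i)%N
    * (\prod_(i < n) qpoch (q ^- 2) (q ^- 2) (lam i))
    * qpoch (q ^- 2) (q ^- 2) n.-1
    / qpoch (q ^- 2) (q ^- 2) (\sum_(i < n) lam i + n.-1)%N
  else 0.

Definition is_hn (h : A -> C) : Prop :=
  [/\ (forall x y, h (x + y) = h x + h y),
      (forall (a : C) x, h (a *: x) = a * h x) &
      (forall lam mu, h (zw_mon lam mu) = h_value lam mu)].

Definition qdisk (alpha l m : nat) : A :=
  if (m <= l)%N then
    z n.-1 ^+ (l - m) * little_qJacobi alpha (l - m) m (q ^+ 2) (Qsum n.-1)
  else
    little_qJacobi alpha (m - l) l (q ^+ 2) (Qsum n.-1) * w n.-1 ^+ (m - l).

End Defs.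

Definition c_const (C : numClosedFieldType) (q : C) (alpha l m : nat) : C :=
  (1 - q ^+ (2 * (alpha + 1))) * q ^+ (2 * m * (alpha + 1))
    / (1 - q ^+ (2 * (alpha + l + m + 1)))
  * (qpoch (q ^+ 2) (q ^+ 2) l * qpoch (q ^+ 2) (q ^+ 2) m)
    / (qpoch (q ^+ (2 * (alpha + 1))) (q ^+ 2) l
       * qpoch (q ^+ (2 * (alpha + 1))) (q ^+ 2) m).

(* With p = q^2, Z = z_n, W = w_n and Q = Q_{n-1}, the relations give ZW = 1 - Q,
   WZ = 1 - pQ, and Q q-commutes with Z and W.  Hence Z^j W^j and W^d Z^d are
   polynomials in Q, and the squared norm of R_{l,m} becomes a double sum, over the
   coefficients of the little q-Jacobi polynomial P(Q), of the moments
   h(Q^k Z^j W^j W^d Z^d).  These moments obey two three-term recursions that,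
   together with the value of h_n on z_n^j w_n^j, determine them in closed form.
   Summing one Jacobi coefficient against the moments is a q-Chu-Vandermonde sum,
   which vanishes below the top degree; only the leading term survives and gives
   c_{l,m}. *)

From mathcomp Require Import all_boot all_order all_algebra.
From mathcomp.algebra_tactics Require Import ring.
From mathcomp Require Import zify.
Set Implicit Arguments. Unset Strict Implicit. Unset Printing Implicit Defensive.
Import Order.TTheory GRing.Theory Num.Theory.
Local Open Scope ring_scope.

Section QPochhammer.
Variable C : numClosedFieldType.
Implicit Types (a r : C) (k l : nat).

Lemma qpoch0 a r : qpoch a r 0 = 1.
Proof. by rewrite /qpoch big_ord0. Qed.

Lemma qpochS a r k : qpoch a r k.+1 = qpoch a r k * (1 - a * r ^+ k).
Proof. by rewrite /qpoch big_ord_recr. Qed.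

Lemma qpochSl a r k : qpoch a r k.+1 = (1 - a) * qpoch (a * r) r k.
Proof.
rewrite /qpoch big_ord_recl expr0 mulr1; congr (_ * _).
by apply: eq_bigr => i _; rewrite exprS mulrA.
Qed.

Lemma qpochD a r k l : qpoch a r (k + l) = qpoch a r k * qpoch (a * r ^+ k) r l.
Proof.
elim: l => [|l IH]; first by rewrite addn0 qpoch0 mulr1.
by rewrite addnS !qpochS IH -mulrA -mulrA exprD.
Qed.

Lemma qpoch_real a r k :
  a \is Num.real -> r \is Num.real -> qpoch a r k \is Num.real.
Proof.
move=> a_real r_real; rewrite /qpoch rpred_prod // => i _.
by rewrite rpredB ?rpred1 // rpredM // rpredX.
Qed.

Lemma expr_prod_ord (x : C) k : x ^+ k = \prod_(i < k) x.
Proof. by rewrite prodr_const card_ord. Qed.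

Lemma sumr_ord_shift (g : nat -> C) k :
  \sum_(i < k) g i.+1 = \sum_(i < k) g i + g k - g 0%N.
Proof.
have E : \sum_(i < k) g i + g k = g 0%N + \sum_(i < k) g i.+1.
  by rewrite -(big_ord_recr k (fun i => g i)) big_ord_recl.
by rewrite E; ring.
Qed.

End QPochhammer.

Section UnitInterval.
Variable C : numClosedFieldType.
Variable p : C.
Hypotheses (p_gt0 : 0 < p) (p_lt1 : p < 1).

Lemma pexp_neq0 e : p ^+ e != 0.
Proof. by rewrite expf_neq0 // gt_eqF. Qed.

Lemma pexp_neq1 e : (0 < e)%N -> p ^+ e != 1.
Proof.
move=> e_gt0; apply/eqP => pe1.
have := exprn_ilt1 e (ltW p_gt0) p_lt1.
by rewrite pe1 ltxx -lt0n e_gt0.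
Qed.

Lemma onem_pexp_neq0 e : (0 < e)%N -> 1 - p ^+ e != 0.
Proof. by move=> e_gt0; rewrite subr_eq0 eq_sym pexp_neq1. Qed.

Lemma qpoch_pexp_neq0 e k : (0 < e)%N -> qpoch (p ^+ e) p k != 0.
Proof.
move=> e_gt0; rewrite /qpoch prodf_seq_neq0; apply/allP => i _ /=.
by rewrite -exprD onem_pexp_neq0 // addn_gt0 e_gt0.
Qed.

Lemma qpoch_pp_neq0 k : qpoch p p k != 0.
Proof. by have := @qpoch_pexp_neq0 1 k isT; rewrite expr1. Qed.

Lemma qpoch_pexpV_neq0 e k : (0 < e)%N -> qpoch ((p ^+ e)^-1) p^-1 k != 0.
Proof.
move=> e_gt0; rewrite /qpoch prodf_seq_neq0; apply/allP => i _ /=.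
rewrite -exprVn -exprD exprVn subr_eq0 eq_sym invr_eq1.
by rewrite pexp_neq1 // addn_gt0 e_gt0.
Qed.

Definition qfall D i := \prod_(r < i) (p ^+ D - p ^+ r).
Definition qcv_coef D i := qfall D i / qpoch p p i.
Definition qshift_prod (y c : C) i := \prod_(r < i) (y - c * p ^+ r).
Definition qtail (c : C) D i := \prod_(r < D - i) (1 - c * p ^+ (i + r)).

Lemma qfallSS D i : qfall D.+1 i.+1 = (p ^+ D.+1 - 1) * p ^+ i * qfall D i.
Proof.
rewrite /qfall big_ord_recl expr0 -mulrA; congr (_ * _).
rewrite (expr_prod_ord p i) -big_split /=; apply: eq_bigr => r _.
by rewrite /bump /= add1n !exprS mulrBr.
Qed.

Lemma qfallSr D i : qfall D i.+1 = qfall D i * (p ^+ D - p ^+ i).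
Proof. by rewrite /qfall big_ord_recr. Qed.

Lemma qfall_qpoch D i : qfall D i = qpoch (p ^- D) p i * (p ^+ D) ^+ i.
Proof.
rewrite /qfall /qpoch (expr_prod_ord (p ^+ D) i) -big_split /=.
by apply: eq_bigr => r _; field; rewrite pexp_neq0.
Qed.

Lemma qcv_coef0 D : qcv_coef D 0 = 1.
Proof. by rewrite /qcv_coef /qfall big_ord0 qpoch0 divr1. Qed.

Lemma qcv_coefSS D i :
  qcv_coef D.+1 i.+1 = p ^+ i.+1 * qcv_coef D i.+1 - p ^+ i * qcv_coef D i.
Proof.
rewrite /qcv_coef qfallSS qfallSr qpochS !exprS.
have := qpoch_pp_neq0 i; have := onem_pexp_neq0 (ltn0Sn i); rewrite exprS.
by move=> *; field; apply/andP.
Qed.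

Lemma qcv_coef_over D : qcv_coef D D.+1 = 0.
Proof. by rewrite /qcv_coef qfallSr subrr mulr0 mul0r. Qed.

Lemma qshift_prod_qpoch (b y c : C) i :
  y * b = c -> qshift_prod y c i = qpoch b p i * y ^+ i.
Proof.
move=> <-; rewrite /qshift_prod /qpoch (expr_prod_ord y i) -big_split /=.
by apply: eq_bigr => r _; ring.
Qed.

Lemma qpoch_qtail (c : C) D i : (i <= D)%N -> qpoch c p i * qtail c D i = qpoch c p D.
Proof.
move=> le_iD; rewrite -{2}(subnKC le_iD) qpochD /qtail /qpoch; congr (_ * _).
by apply: eq_bigr => r _; rewrite exprD mulrA.
Qed.

Lemma q_Chu_Vandermonde D (y c : C) :
  \sum_(i < D.+1) qcv_coef D i * qshift_prod y c i * qtail c D i = qpoch y p D.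
Proof.
elim: D y c => [|D IH] y c.
  by rewrite big_ord_recl big_ord0 qcv_coef0 /qshift_prod /qtail !big_ord0 qpoch0; ring.
rewrite qpochSl -(IH (y * p) (c * p)) big_distrr /=.
rewrite big_ord_recl /= qcv_coef0 /qshift_prod big_ord0 mul1r.
(* Pascal's rule qcv_coefSS splits each term into a telescoping part and a term
   of the induction hypothesis at (y p, c p). *)
pose g s := p ^+ s * qcv_coef D s * qshift_prod y c s * qtail c D.+1 s.
have split_term (s : 'I_D.+1) :
   qcv_coef D.+1 (bump 0 s) * \prod_(r < bump 0 s) (y - c * p ^+ r)
     * qtail c D.+1 (bump 0 s)
   = g s.+1 - p ^+ s * qcv_coef D s * qshift_prod y c s.+1 * qtail c D.+1 s.+1.
  by rewrite /bump leq0n add1n qcv_coefSS /g /qshift_prod; ring.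
rewrite (eq_bigr _ (fun s _ => split_term s)) sumrB sumr_ord_shift.
have -> : g D.+1 = 0 by rewrite /g qcv_coef_over; ring.
have -> : g 0%N = qtail c D.+1 0 by rewrite /g qcv_coef0 /qshift_prod big_ord0; ring.
rewrite (_ : forall a b c0 : C, 1 * c0 + (a + 0 - c0 - b) = a - b); last by move=> *; ring.
rewrite -sumrB; apply: eq_bigr => s _.
have le_sD : (s <= D)%N by rewrite -ltnS ltn_ord.
have tailS : qtail c D.+1 s = (1 - c * p ^+ s) * qtail c D.+1 s.+1.
  rewrite /qtail (subSn le_sD) big_ord_recl addn0; congr (_ * _).
  by apply: eq_bigr => r _ /=; rewrite /bump leq0n add1n addnS addSn.
have tail_shift : qtail (c * p) D s = qtail c D.+1 s.+1.
  by rewrite /qtail subSS; apply: eq_bigr => r _; rewrite -mulrA -exprS addSn.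
have prod_shift : qshift_prod (y * p) (c * p) s = p ^+ s * qshift_prod y c s.
  rewrite /qshift_prod (expr_prod_ord p s) -big_split /=.
  by apply: eq_bigr => r _; ring.
have prodS : qshift_prod y c s.+1 = qshift_prod y c s * (y - c * p ^+ s).
  by rewrite /qshift_prod big_ord_recr.
rewrite /g tailS tail_shift prodS.
rewrite (prod_shift : \prod_(r < s) (y * p - c * p * p ^+ r) = _) /qshift_prod.
ring.
Qed.

Lemma qpoch_pexp_ratio_eq0 D j : (j < D)%N -> qpoch (p ^+ j.+1 / p ^+ D) p D = 0.
Proof.
move=> lt_jD; have lt_D : (D - j.+1 < D)%N by lia.
rewrite /qpoch (bigD1 (Ordinal lt_D)) //=.
rewrite mulrAC -exprD (_ : (j.+1 + (D - j.+1) = D)%N); last by lia.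
by rewrite mulfV ?pexp_neq0 // subrr mul0r.
Qed.

Lemma qpoch_pexp_ratio_diag D : qpoch (p ^+ D.+1 / p ^+ D) p D = qpoch p p D.
Proof. by rewrite exprS mulfK // pexp_neq0. Qed.

Lemma qpoch_pexpN_reflect D :
  qpoch (p ^- D) p D * p ^+ D * \prod_(i < D) (- p ^+ (D - i.+1)) = qpoch p p D.
Proof.
rewrite {2}(expr_prod_ord p D) /qpoch -!big_split /=.
rewrite (eq_bigr (fun i : 'I_D => 1 - p ^+ (D - i))); last first.
  move=> i _; have lt_iD := ltn_ord i.
  have -> : (D - i = (D - i.+1).+1)%N by lia.
  have DE : D = (i + (D - i.+1)).+1 by lia.
  move: (D - i.+1)%N DE => e DE; rewrite {1}DE exprS exprD exprS.
  have := pexp_neq0 i; have := pexp_neq0 e; have : p != 0 by rewrite gt_eqF.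
  by move=> *; field; apply/and3P.
rewrite -(big_mkord xpredT (fun i => 1 - p ^+ (D - i))).
rewrite -(big_mkord xpredT (fun i => 1 - p * p ^+ i)).
rewrite big_rev_mkord subn0 big_mkord; apply: eq_bigr => i _.
by rewrite -exprS; congr (1 - p ^+ _); have := ltn_ord i; lia.
Qed.

Section Moments.
Variable N : nat.
Hypothesis N_gt0 : (0 < N)%N.

(* Closed form of h(Q^k (Z^j W^j) (W^d Z^d)), see hpoly_moment. *)
Definition moment k j d : C := (1 - p ^+ N) * p ^+ ((N + k) * j) * qpoch p p (j + d)
   / qpoch (p ^+ (N + k)) p (j + d).+1.

Lemma moment_recQ k j d : moment k.+1 j d = p ^+ j * (moment k j d - moment k j.+1 d).
Proof.
rewrite /moment addSn; set u := p ^+ (N + k).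
have uS : p ^+ (N + k.+1) = u * p by rewrite addnS exprS mulrC.
rewrite uS !exprM uS exprMn exprSr.
rewrite (qpochS p p (j + d)) (qpochSl u p (j + d).+1) (qpochSl u p (j + d)) (qpochS (u * p)).
have : qpoch (u * p) p (j + d) != 0 by rewrite -uS qpoch_pexp_neq0 // addn_gt0 N_gt0.
have : 1 - u != 0 by rewrite onem_pexp_neq0 // addn_gt0 N_gt0.
have : 1 - u * p * p ^+ (j + d) != 0.
  by rewrite -uS -exprD onem_pexp_neq0 // !addn_gt0 N_gt0.
rewrite -/u; clearbody u; move=> *; field; exact/and3P.
Qed.

Lemma moment_recWZ k j d : moment k j d.+1 = moment k j d - p ^+ d.+1 * moment k.+1 j d.
Proof.
rewrite /moment addnS; set u := p ^+ (N + k).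
have uS : p ^+ (N + k.+1) = u * p by rewrite addnS exprS mulrC.
have pdS : p ^+ d.+1 = p ^+ (j + d).+1 / p ^+ j.
  by rewrite -addnS exprD mulrC mulKf // pexp_neq0.
rewrite uS !exprM uS exprMn pdS exprS.
rewrite (qpochS p p (j + d)) (qpochSl u p (j + d).+1) (qpochSl u p (j + d)) (qpochS (u * p)).
have : qpoch (u * p) p (j + d) != 0 by rewrite -uS qpoch_pexp_neq0 // addn_gt0 N_gt0.
have : 1 - u != 0 by rewrite onem_pexp_neq0 // addn_gt0 N_gt0.
have : 1 - u * p * p ^+ (j + d) != 0.
  by rewrite -uS -exprD onem_pexp_neq0 // !addn_gt0 N_gt0.
have : p ^+ j != 0 by rewrite pexp_neq0.
rewrite -/u; clearbody u; move=> *; field; exact/and4P.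
Qed.

Lemma moment_transpose k d : moment k d 0 = p ^+ ((N + k) * d) * moment k 0 d.
Proof. by rewrite /moment !addn0 add0n muln0 expr0 mulr1; ring. Qed.

Lemma qpochV_qpoch j :
  qpoch p^-1 p^-1 j * qpoch (p ^+ N.+1) p j
  = p ^+ (N * j) * qpoch p p j * qpoch (p^-1 ^+ N.+1) p^-1 j.
Proof.
elim: j => [|j IH]; first by rewrite !qpoch0 muln0 expr0 !mulr1.
rewrite !qpochS mulnS exprD.
transitivity (qpoch p^-1 p^-1 j * qpoch (p ^+ N.+1) p j *
  ((1 - p^-1 * p^-1 ^+ j) * (1 - p ^+ N.+1 * p ^+ j))); first by ring.
rewrite IH !exprVn exprS.
have := pexp_neq0 j; have := pexp_neq0 N; have : p != 0 by rewrite gt_eqF.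
by move=> *; field; apply/and3P.
Qed.

Lemma h_value_moment j :
  qpoch p^-1 p^-1 j * qpoch p^-1 p^-1 N / qpoch p^-1 p^-1 (j + N) = moment 0 j 0.
Proof.
rewrite addnC qpochD /moment !addn0 qpochSl -exprSr.
have qpN : qpoch p^-1 p^-1 N != 0 by have := @qpoch_pexpV_neq0 1 N isT; rewrite expr1.
have qpVj : qpoch (p^-1 ^+ N.+1) p^-1 j != 0 by rewrite exprVn qpoch_pexpV_neq0.
have qpj : qpoch (p ^+ N.+1) p j != 0 by rewrite qpoch_pexp_neq0.
have := onem_pexp_neq0 N_gt0.
rewrite -exprS (_ : qpoch p^-1 p^-1 j = p ^+ (N * j) * qpoch p p j
   * qpoch (p^-1 ^+ N.+1) p^-1 j / qpoch (p ^+ N.+1) p j); last first.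
  by rewrite -qpochV_qpoch mulfK.
by rewrite exprM => ?; field; apply/and4P.
Qed.

(* Coefficient of x^k in the little q-Jacobi polynomial P^{(N-1, d)}_D(x; p). *)
Definition jacobi_coef D d k :=
  (qpoch (p ^- D) p k * qpoch (p ^+ (N + d + D)) p k)
    / (qpoch (p ^+ N) p k * qpoch p p k) * p ^+ k.

Definition moment_scale j d D := (1 - p ^+ N) * p ^+ (N * j) * qpoch p p (j + d)
      / (qpoch (p ^+ N) p (j + d).+1 * qpoch (p ^+ (N + j + d).+1) p D).

Lemma qpoch_pexpD_swap i l : qpoch (p ^+ N) p i * qpoch (p ^+ (N + i)) p l
   = qpoch (p ^+ N) p l * qpoch (p ^+ (N + l)) p i.
Proof. by rewrite !exprD -!qpochD addnC. Qed.

Lemma jacobi_coef_moment D d j i : (i <= D)%N ->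
  let y := p ^+ j.+1 / p ^+ D in
  let c := p ^+ (N + j + d).+1 in
  jacobi_coef D d i * moment i j d
  = moment_scale j d D * (qcv_coef D i * qshift_prod y c i * qtail c D i).
Proof.
move=> le_iD y c.
have yb : y * p ^+ (N + d + D) = c.
  rewrite /y /c -addnS (addnC (N + d)) exprD mulrA mulfVK ?pexp_neq0 // -exprD.
  by congr (_ ^+ _); lia.
have qci : qpoch c p i != 0 by rewrite qpoch_pexp_neq0.
rewrite /qcv_coef qfall_qpoch (qshift_prod_qpoch i yb).
rewrite (_ : qtail c D i = qpoch c p D / qpoch c p i); last first.
  by rewrite -(qpoch_qtail _ le_iD) [qpoch c p i * _]mulrC mulfK.
have qNi : qpoch (p ^+ N) p i != 0 by rewrite qpoch_pexp_neq0.
rewrite /jacobi_coef /moment (_ : qpoch (p ^+ (N + i)) p (j + d).+1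
     = qpoch (p ^+ N) p (j + d).+1 * qpoch c p i / qpoch (p ^+ N) p i); last first.
  have := qpoch_pexpD_swap i (j + d).+1.
  rewrite (_ : p ^+ (N + (j + d).+1) = c); last by rewrite /c; congr (_ ^+ _); lia.
  by move=> <-; rewrite [qpoch (p ^+ N) p i * _]mulrC mulfK.
rewrite (_ : y ^+ i = (p ^+ j) ^+ i * p ^+ i / (p ^+ D) ^+ i); last first.
  by rewrite /y expr_div_n exprSr exprMn.
rewrite (_ : p ^+ ((N + i) * j) = p ^+ (N * j) * (p ^+ j) ^+ i); last first.
  by rewrite -exprM -exprD; congr (_ ^+ _); lia.
rewrite /moment_scale -/c.
have := qpoch_pp_neq0 i; have : qpoch (p ^+ N) p (j + d).+1 != 0 by rewrite qpoch_pexp_neq0.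
have : qpoch c p D != 0 by rewrite qpoch_pexp_neq0.
have : (p ^+ D) ^+ i != 0 by rewrite expf_neq0 ?pexp_neq0.
by move=> h1 h2 h3 h4; field; rewrite qci qNi h1 h2 h3 h4.
Qed.

Lemma sum_jacobi_coef_moment D d j : (j <= D)%N ->
  \sum_(i < D.+1) jacobi_coef D d i * moment i j d
  = moment_scale j d D * qpoch (p ^+ j.+1 / p ^+ D) p D.
Proof.
move=> le_jD; rewrite -(q_Chu_Vandermonde _ _ (p ^+ (N + j + d).+1)) big_distrr /=.
by apply: eq_bigr => i _; rewrite jacobi_coef_moment // -ltnS ltn_ord.
Qed.

Definition jacobi_moment D d k j := \sum_(i < D.+1) jacobi_coef D d i * moment (k + i) j d.

Lemma jacobi_moment_recQ D d k j :
  jacobi_moment D d k.+1 j = p ^+ j * (jacobi_moment D d k j - jacobi_moment D d k j.+1).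
Proof.
rewrite /jacobi_moment -sumrB big_distrr /=; apply: eq_bigr => i _.
by rewrite addSn moment_recQ; ring.
Qed.

Lemma jacobi_moment_eq0 D d k j : (k + j < D)%N -> jacobi_moment D d k j = 0.
Proof.
elim: k j => [|k IH] j lt_kjD; last by rewrite jacobi_moment_recQ !IH ?subrr ?mulr0 //; lia.
rewrite /jacobi_moment (eq_bigr (fun i : 'I_D.+1 => jacobi_coef D d i * moment i j d)) //.
by rewrite sum_jacobi_coef_moment ?qpoch_pexp_ratio_eq0 ?mulr0 //; lia.
Qed.

Lemma jacobi_moment_antidiag D d k : (k <= D)%N ->
  jacobi_moment D d k (D - k) = (\prod_(i < k) - p ^+ (D - i.+1)) * jacobi_moment D d 0 D.
Proof.
elim: k => [|k IH] le_kD; first by rewrite big_ord0 mul1r subn0.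
rewrite jacobi_moment_recQ jacobi_moment_eq0; last by lia.
have <- : (D - k = (D - k.+1).+1)%N by lia.
by rewrite IH ?big_ord_recr /=; [ring | lia].
Qed.

Definition norm_const l m := (1 - p ^+ N) / (1 - p ^+ (N + l + m))
   * (qpoch p p l * qpoch p p m) / (qpoch (p ^+ N) p l * qpoch (p ^+ N) p m).

Lemma jacobi_moment_top D d :
  jacobi_moment D d D 0
  = (\prod_(i < D) - p ^+ (D - i.+1)) * (moment_scale D d D * qpoch p p D).
Proof.
rewrite -[X in jacobi_moment _ _ _ X](subnn D) jacobi_moment_antidiag //.
rewrite /jacobi_moment (eq_bigr (fun i : 'I_D.+1 => jacobi_coef D d i * moment i D d)) //.
by rewrite sum_jacobi_coef_moment // qpoch_pexp_ratio_diag.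
Qed.

Lemma jacobi_coef_top_moment D d :
  jacobi_coef D d D * ((\prod_(i < D) - p ^+ (D - i.+1)) * (moment_scale D d D * qpoch p p D))
  = p ^+ (D * N) * norm_const (D + d) D.
Proof.
have e_gt0 : (0 < N + d + D)%N by rewrite !addn_gt0 N_gt0.
have e'_gt0 : (0 < N + (D + d) + D)%N by rewrite !addn_gt0 N_gt0.
have qp_top : qpoch (p ^+ (N + d + D)) p D
   = (1 - p ^+ (N + d + D)) * qpoch (p ^+ (N + D + d).+1) p D
      / (1 - p ^+ (N + (D + d) + D)).
  have := qpochSl (p ^+ (N + d + D)) p D.
  rewrite qpochS -!exprSr -exprD (_ : (N + d + D).+1 = (N + D + d).+1)%N; last by lia.
  rewrite (_ : (N + d + D + D = N + (D + d) + D)%N); last by lia.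
  by move=> <-; rewrite mulfK // onem_pexp_neq0.
have qpND : qpoch (p ^+ N) p (D + d).+1 = qpoch (p ^+ N) p (D + d) * (1 - p ^+ (N + d + D)).
  by rewrite qpochS -exprD; congr (_ * (1 - p ^+ _)); lia.
have prod_neq0 : \prod_(i < D) - p ^+ (D - i.+1) != 0.
  by rewrite prodf_seq_neq0; apply/allP => i _ /=; rewrite oppr_eq0 pexp_neq0.
have qpV : qpoch (p ^- D) p D
    = qpoch p p D / (p ^+ D * \prod_(i < D) - p ^+ (D - i.+1)).
  by rewrite -qpoch_pexpN_reflect; field; rewrite prod_neq0 pexp_neq0.
rewrite /jacobi_coef /moment_scale /norm_const qp_top qpND qpV (mulnC D N) exprM.
have := onem_pexp_neq0 e_gt0; have := onem_pexp_neq0 e'_gt0.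
have := qpoch_pp_neq0 D; have := pexp_neq0 D.
have : qpoch (p ^+ N) p (D + d) != 0 by rewrite qpoch_pexp_neq0.
have : qpoch (p ^+ N) p D != 0 by rewrite qpoch_pexp_neq0.
have : qpoch (p ^+ (N + D + d).+1) p D != 0 by rewrite qpoch_pexp_neq0.
move=> h1 h2 h3 h4 h5 h6 h7; field.
by rewrite h1 h2 h3 h4 h5 h6 h7 prod_neq0.
Qed.

Lemma jacobi_moment_sum D d :
  \sum_(k1 < D.+1) \sum_(k2 < D.+1) jacobi_coef D d k1 * jacobi_coef D d k2 * moment (k1 + k2) 0 d
  = p ^+ (D * N) * norm_const (D + d) D.
Proof.
rewrite (eq_bigr (fun k1 : 'I_D.+1 => jacobi_coef D d k1 * jacobi_moment D d k1 0)); last first.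
  move=> k1 _; rewrite /jacobi_moment big_distrr /=.
  by apply: eq_bigr => k2 _; rewrite mulrA.
rewrite big_ord_recr /= big1 => [|k1 _]; last first.
  by rewrite jacobi_moment_eq0 ?mulr0 // addn0 ltn_ord.
by rewrite add0r jacobi_moment_top jacobi_coef_top_moment.
Qed.

Lemma norm_constC l m : norm_const l m = norm_const m l.
Proof. by rewrite /norm_const addnAC (mulrC (qpoch p p l)) (mulrC (qpoch (p ^+ N) p l)). Qed.

End Moments.

End UnitInterval.

Section Involution.
Variables (C : numClosedFieldType) (A : lalgType C) (star : A -> A).
Hypotheses (starD : forall x y, star (x + y) = star x + star y)
  (starZ : forall (a : C) x, star (a *: x) = Num.conj a *: star x)
  (starM : forall x y, star (x * y) = star y * star x)
  (starK : forall x, star (star x) = x).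

Lemma star1 : star 1 = 1.
Proof. by have := starM 1 (star 1); rewrite mul1r starK mul1r => /esym. Qed.

Lemma star0 : star 0 = 0.
Proof. by rewrite -[in LHS](scale0r (0 : A)) starZ conjC0 scale0r. Qed.

(* In a left algebra scalars need not pass through a left factor; the
   anti-multiplicative involution makes them do so. *)
Lemma star_scalerAr (a : C) (x y : A) : x * (a *: y) = a *: (x * y).
Proof.
have scale_central (b : C) (v : A) : b *: v = v * (b *: 1).
  by rewrite -[v in RHS]starK -[b *: 1]starK -starM starZ star1 -scalerAl
    mul1r starZ starK conjCK.
by rewrite scale_central mulrA -scale_central.
Qed.

Lemma star_sum I (r : seq I) (P : pred I) (F : I -> A) :
  star (\sum_(i <- r | P i) F i) = \sum_(i <- r | P i) star (F i).
Proof. exact: (big_morph star starD star0). Qed.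

Lemma star_exp x k : star (x ^+ k) = star x ^+ k.
Proof.
elim: k => [|k IH]; first by rewrite !expr0 star1.
by rewrite exprS starM IH exprSr.
Qed.

End Involution.

Section LastGenerator.
Variables (C : numClosedFieldType) (A : lalgType C).
Hypothesis mulrZ : forall (a : C) (x y : A), x * (a *: y) = a *: (x * y).
Variable p : C.
Hypotheses (p_gt0 : 0 < p) (p_lt1 : p < 1).
Variable N : nat.
Hypothesis N_gt0 : (0 < N)%N.
Variables Z W Q : A.
Hypotheses (Q_add_ZW : Q + Z * W = 1) (WZ_ZW : W * Z = Z * W + (1 - p) *: Q).
Variable h : A -> C.
Hypotheses (hD : forall x y, h (x + y) = h x + h y)
  (hZ : forall (a : C) x, h (a *: x) = a * h x)
  (h_ZW_power : forall j, h (Z ^+ j * W ^+ j) = moment p N 0 j 0).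

Lemma ZW_eq : Z * W = 1 - Q.
Proof. by rewrite -Q_add_ZW addrC addKr. Qed.

Lemma WZ_eq : W * Z = 1 - p *: Q.
Proof. by rewrite WZ_ZW ZW_eq scalerBl scale1r addrA subrK. Qed.

Lemma Q_eq : Q = 1 - Z * W.
Proof. by rewrite ZW_eq opprB addrC subrK. Qed.

Lemma QZ_eq : Q * Z = p *: (Z * Q).
Proof.
by rewrite {1}Q_eq mulrBl mul1r -mulrA WZ_eq mulrBr mulr1 mulrZ opprB addrC subrK.
Qed.

Lemma WQ_eq : W * Q = p *: (Q * W).
Proof.
by rewrite {1}Q_eq mulrBr mulr1 mulrA WZ_eq mulrBl mul1r -scalerAl opprB addrC subrK.
Qed.

Lemma ZQ_eq : Z * Q = p^-1 *: (Q * Z).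
Proof. by rewrite QZ_eq scalerA mulVf ?scale1r // gt_eqF. Qed.

Lemma ZnQ j : Z ^+ j * Q = p^-1 ^+ j *: (Q * Z ^+ j).
Proof.
elim: j => [|j IH]; first by rewrite !expr0 mul1r mulr1 scale1r.
rewrite exprSr -mulrA ZQ_eq mulrZ mulrA IH -scalerAl -mulrA -exprSr scalerA.
by rewrite -exprS.
Qed.

Lemma WnQ d : W ^+ d * Q = p ^+ d *: (Q * W ^+ d).
Proof.
elim: d => [|d IH]; first by rewrite !expr0 mul1r mulr1 scale1r.
rewrite exprS -mulrA IH mulrZ mulrA WQ_eq -scalerAl -mulrA -exprS scalerA.
by rewrite -exprSr.
Qed.

Lemma ZnQn d s : Z ^+ d * Q ^+ s = p^-1 ^+ (d * s) *: (Q ^+ s * Z ^+ d).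
Proof.
elim: s => [|s IH]; first by rewrite muln0 !expr0 mul1r mulr1 scale1r.
rewrite exprS mulrA ZnQ -scalerAl -[Q * Z ^+ d * _]mulrA IH mulrZ scalerA.
by rewrite mulrA -exprD mulnS.
Qed.

Lemma Q_comm_scalars : commr_rmorph (in_alg A) Q.
Proof. by move=> c; rewrite /GRing.comm /= mulr_algl mulrZ mulr1. Qed.

Definition ev : {rmorphism {poly C} -> A} := horner_morph Q_comm_scalars.

Lemma ev_X : ev 'X = Q.
Proof. exact: horner_morphX. Qed.

Lemma ev_scale c f : ev (c%:P * f) = c *: ev f.
Proof. by rewrite rmorphM -mulr_algl; congr (_ * _); exact: horner_morphC. Qed.

Lemma ev_Xn k : ev ('X ^+ k) = Q ^+ k.
Proof. by rewrite rmorphXn ev_X. Qed.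

Lemma Q_ev_comm f : Q * ev f = ev f * Q.
Proof. by rewrite -ev_X -!rmorphM mulrC. Qed.

Definition qlin (a r : C) j : {poly C} := \prod_(i < j) (1 - (a * r ^+ i)%:P * 'X).

Lemma qlinS a r j : qlin a r j.+1 = qlin a r j * (1 - (a * r ^+ j)%:P * 'X).
Proof. by rewrite /qlin big_ord_recr. Qed.

Lemma qlin0 a r : qlin a r 0 = 1.
Proof. by rewrite /qlin big_ord0. Qed.

Lemma ZW_power j : Z ^+ j * W ^+ j = ev (qlin 1 p^-1 j).
Proof.
elim: j => [|j IH]; first by rewrite !expr0 mulr1 qlin0 rmorph1.
rewrite qlinS rmorphM rmorphB rmorph1 ev_scale ev_X mul1r -IH.
rewrite exprSr exprS -mulrA [Z * (W * _)]mulrA ZW_eq mulrBl mul1r mulrBr.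
rewrite [Z ^+ j * (Q * _)]mulrA ZnQ -scalerAl -[Q * _ * _]mulrA IH Q_ev_comm.
by rewrite mulrBr mulr1 mulrZ.
Qed.

Lemma WZ_power d : W ^+ d * Z ^+ d = ev (qlin p p d).
Proof.
elim: d => [|d IH]; first by rewrite !expr0 mulr1 qlin0 rmorph1.
rewrite qlinS rmorphM rmorphB rmorph1 ev_scale ev_X -IH.
rewrite exprSr (exprS Z) -mulrA [W * (Z * _)]mulrA WZ_eq mulrBl mul1r mulrBr.
rewrite -scalerAl mulrZ mulrA WnQ -scalerAl -[Q * _ * _]mulrA IH scalerA Q_ev_comm.
by rewrite mulrBr mulr1 mulrZ.
Qed.

Lemma h0 : h 0 = 0.
Proof. by have := hZ 0 0; rewrite scale0r mul0r. Qed.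

Lemma hB x y : h (x - y) = h x - h y.
Proof. by rewrite hD -scaleN1r hZ mulN1r. Qed.

Lemma h_sum I (r : seq I) (P : pred I) (F : I -> A) :
  h (\sum_(i <- r | P i) F i) = \sum_(i <- r | P i) h (F i).
Proof. exact: (big_morph h hD h0). Qed.

Definition hpoly f := h (ev f).

Lemma hpolyB f g : hpoly (f - g) = hpoly f - hpoly g.
Proof. by rewrite /hpoly rmorphB hB. Qed.

Lemma hpoly_scale c f : hpoly (c%:P * f) = c * hpoly f.
Proof. by rewrite /hpoly ev_scale hZ. Qed.

Lemma hpoly_recQ k j d :
  hpoly ('X ^+ k.+1 * qlin 1 p^-1 j * qlin p p d)
  = p ^+ j * (hpoly ('X ^+ k * qlin 1 p^-1 j * qlin p p d)
              - hpoly ('X ^+ k * qlin 1 p^-1 j.+1 * qlin p p d)).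
Proof.
have -> : 'X ^+ k * qlin 1 p^-1 j.+1 * qlin p p d
   = 'X ^+ k * qlin 1 p^-1 j * qlin p p d
     - (p^-1 ^+ j)%:P * ('X ^+ k.+1 * qlin 1 p^-1 j * qlin p p d).
  by rewrite qlinS mul1r exprS; ring.
rewrite hpolyB hpoly_scale opprB addrC subrK mulrA.
by rewrite -exprMn mulfV ?gt_eqF // expr1n mul1r.
Qed.

Lemma hpoly_recWZ k j d :
  hpoly ('X ^+ k * qlin 1 p^-1 j * qlin p p d.+1)
  = hpoly ('X ^+ k * qlin 1 p^-1 j * qlin p p d)
    - p ^+ d.+1 * hpoly ('X ^+ k.+1 * qlin 1 p^-1 j * qlin p p d).
Proof.
have -> : 'X ^+ k * qlin 1 p^-1 j * qlin p p d.+1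
   = 'X ^+ k * qlin 1 p^-1 j * qlin p p d
     - (p ^+ d.+1)%:P * ('X ^+ k.+1 * qlin 1 p^-1 j * qlin p p d).
  by rewrite qlinS exprS [in RHS]exprS; ring.
by rewrite hpolyB hpoly_scale.
Qed.

Lemma hpoly_moment d k j : hpoly ('X ^+ k * qlin 1 p^-1 j * qlin p p d) = moment p N k j d.
Proof.
elim: d k j => [|d IHd] k j; last by rewrite hpoly_recWZ !IHd -moment_recWZ.
elim: k j => [|k IHk] j; last by rewrite hpoly_recQ !IHk -moment_recQ.
by rewrite /hpoly expr0 mul1r qlin0 mulr1 -ZW_power h_ZW_power.
Qed.

Definition jacobi_poly D d : {poly C} := \sum_(k < D.+1) (jacobi_coef p N D d k)%:P * 'X ^+ k.

Lemma little_qJacobi_ev alpha D d : (alpha + 1 = N)%N ->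
  little_qJacobi alpha d D p Q = ev (jacobi_poly D d).
Proof.
move=> alphaE; rewrite /little_qJacobi /jacobi_poly rmorph_sum; apply: eq_bigr => k _.
rewrite ev_scale ev_Xn /jacobi_coef alphaE.
by have -> : (alpha + d + D + 1 = N + d + D)%N by lia.
Qed.

Lemma jacobi_poly_sandwich D d (F : {poly C}) :
  jacobi_poly D d * F * jacobi_poly D d = \sum_(k1 < D.+1) \sum_(k2 < D.+1)
     (jacobi_coef p N D d k1 * jacobi_coef p N D d k2)%:P * ('X ^+ (k1 + k2) * F).
Proof.
rewrite /jacobi_poly -mulrA big_distrl /=; apply: eq_bigr => k1 _.
rewrite big_distrr /= big_distrr /=; apply: eq_bigr => k2 _.
by rewrite [in RHS]polyCM [in RHS]exprD; ring.
Qed.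

Lemma h_ZQW d s : h (Z ^+ d * Q ^+ s * W ^+ d) = p ^+ (N * d) * moment p N s 0 d.
Proof.
rewrite ZnQn -scalerAl -mulrA ZW_power -ev_Xn -rmorphM hZ.
have := hpoly_moment 0 s d; rewrite qlin0 mulr1 /hpoly => ->.
rewrite moment_transpose mulrA; congr (_ * _).
by rewrite mulnDl exprD (mulnC s d) mulrCA exprVn mulVf ?mulr1 // expf_neq0 // gt_eqF.
Qed.

Lemma h_jacobi_WZ_jacobi alpha D d : (alpha + 1 = N)%N ->
  let P := little_qJacobi alpha d D p Q in
  h (P * W ^+ d * (Z ^+ d * P)) = p ^+ (D * N) * norm_const p N (D + d) D.
Proof.
move=> alphaE P; rewrite /P little_qJacobi_ev // mulrA -[_ * W ^+ d * _]mulrA.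
rewrite WZ_power -!rmorphM jacobi_poly_sandwich rmorph_sum h_sum.
rewrite -jacobi_moment_sum //; apply: eq_bigr => k1 _.
rewrite rmorph_sum h_sum; apply: eq_bigr => k2 _.
by rewrite ev_scale hZ -(hpoly_moment d _ 0) qlin0 mulr1.
Qed.

Lemma h_Z_jacobi_jacobi_W alpha D d : (alpha + 1 = N)%N ->
  let P := little_qJacobi alpha d D p Q in
  h (Z ^+ d * P * (P * W ^+ d)) = p ^+ (N * d) * (p ^+ (D * N) * norm_const p N (D + d) D).
Proof.
move=> alphaE P; rewrite /P little_qJacobi_ev // mulrA -[Z ^+ d * _ * _]mulrA.
have := jacobi_poly_sandwich D d 1; rewrite !mulr1 -rmorphM => ->.
rewrite rmorph_sum big_distrr big_distrl h_sum.
rewrite -jacobi_moment_sum // big_distrr; apply: eq_bigr => k1 _ /=.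
rewrite rmorph_sum big_distrr big_distrl h_sum big_distrr; apply: eq_bigr => k2 _ /=.
by rewrite mulr1 ev_scale ev_Xn mulrZ -scalerAl hZ h_ZQW; ring.
Qed.

End LastGenerator.

Section Generators.
Variables (C : numClosedFieldType) (A : lalgType C) (N : nat) (q : C).
Variables (z w : nat -> A) (star : A -> A).

Lemma Qsum_last : Qsum N.+1 z w N.+1 = Qsum N.+1 z w N + z N * w N.
Proof.
rewrite /Qsum big_mkcond [in RHS]big_mkcond big_ord_recr [in RHS]big_ord_recr /=.
rewrite ltnn ltnSn addr0.
by congr (_ + _); apply: eq_bigr => i _ /=; rewrite ltn_ord (leqW (ltn_ord i)).
Qed.

Definition last_exponent j (i : nat) : nat := if i == N then j else 0%N.

Lemma zw_mon_last j :
  zw_mon N.+1 z w (last_exponent j) (last_exponent j) = z N ^+ j * w N ^+ j.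
Proof.
rewrite /zw_mon big_ord_recr big_ord_recl /= /last_exponent subn0 eqxx.
rewrite big1 ?mul1r => [|i _]; last by rewrite (ltn_eqF (ltn_ord i)).
rewrite big1 ?mulr1 // => i _.
rewrite (ltn_eqF (_ : N - bump 0 i < N)%N) //.
by rewrite /bump leq0n add1n; have := ltn_ord i; lia.
Qed.

Lemma h_value_last j : h_value N.+1 q (last_exponent j) (last_exponent j)
  = qpoch (q ^- 2) (q ^- 2) j * qpoch (q ^- 2) (q ^- 2) N / qpoch (q ^- 2) (q ^- 2) (j + N).
Proof.
rewrite /h_value (introT forallP (fun i => eqxx _)).
rewrite !big_ord_recr /= /last_exponent eqxx subnn mul0n addn0.
rewrite big1 => [|i _]; last by rewrite (ltn_eqF (ltn_ord i)) muln0.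
rewrite big1 => [|i _]; last by rewrite (ltn_eqF (ltn_ord i)) qpoch0.
rewrite big1 => [|i _]; last by rewrite (ltn_eqF (ltn_ord i)).
by rewrite muln0 expr0 invr1 !mul1r.
Qed.

Lemma star_Qsum i : tZn_structure N.+1 q z w star -> star (Qsum N.+1 z w i) = Qsum N.+1 z w i.
Proof.
move=> [_ [sz sD sZ sM sK]]; rewrite /Qsum (star_sum sD sZ); apply: eq_bigr => k _.
by rewrite sM -(sz k (ltn_ord k)) sK.
Qed.

Lemma star_little_qJacobi alpha beta D (p : C) (x : A) :
  tZn_structure N.+1 q z w star -> p \is Num.real -> star x = x ->
  star (little_qJacobi alpha beta D p x) = little_qJacobi alpha beta D p x.
Proof.
move=> [_ [_ sD sZ sM sK]] p_real sx.
rewrite /little_qJacobi (star_sum sD sZ); apply: eq_bigr => k _.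
rewrite sZ (star_exp sM sK) sx conj_Creal //.
by rewrite !(rpredM, rpred_div, rpredV, rpredX, qpoch_real).
Qed.

End Generators.

Lemma c_const_norm (C : numClosedFieldType) (q : C) alpha l m :
  c_const q alpha l m = (q ^+ 2) ^+ (m * (alpha + 1)) * norm_const (q ^+ 2) (alpha + 1) l m.
Proof.
rewrite /c_const /norm_const -!exprM mulnCA mulnA (mulnC m 2).
by rewrite (_ : (alpha + 1 + l + m = alpha + l + m + 1)%N); [ring | lia].
Qed.

Theorem proposition3p3p2 (C : numClosedFieldType) (A : lalgType C)
  (n : nat) (q : C) (z w : nat -> A) (star : A -> A) (h : A -> C)
  (l m : nat) :
  (2 <= n)%N -> 0 < q -> q < 1 ->
  tZn_structure n q z w star ->
  is_hn n q z w h ->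
  h (star (qdisk n q z w (n - 2) l m) * qdisk n q z w (n - 2) l m)
  = c_const q (n - 2) l m.
Proof.
move=> n_ge2 q_gt0 q_lt1 tZn [hD hZ hmon].
case: n n_ge2 tZn hmon => [|N] // n_ge2 tZn hmon.
have [[_ _ _ WZ_ZW Qsum_n] [star_z _ starZ starM starK]] := tZn.
have [N_gt0 alphaE] : (0 < N)%N /\ (N.+1 - 2 + 1 = N)%N by split; lia.
have [p_gt0 p_lt1] : 0 < q ^+ 2 /\ q ^+ 2 < 1 by rewrite exprn_gt0 ?exprn_ilt1 ?ltW.
have Q_add_ZW : Qsum N.+1 z w N + z N * w N = 1 by rewrite -Qsum_last.
have h_ZW j : h (z N ^+ j * w N ^+ j) = moment (q ^+ 2) N 0 j 0.
  by rewrite -zw_mon_last hmon h_value_last h_value_moment.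
have star_P := star_little_qJacobi _ _ _ tZn (gtr0_real p_gt0) (star_Qsum N tZn).
have mulrZ := star_scalerAr starZ starM starK.
have WZ_rel := WZ_ZW N (ltnSn N).
rewrite /qdisk /= c_const_norm alphaE; case: ifP => [le_ml | /negbT].
  rewrite starM star_P (star_exp starM starK) star_z //.
  rewrite (h_jacobi_WZ_jacobi mulrZ p_gt0 p_lt1 N_gt0 Q_add_ZW WZ_rel hD hZ h_ZW) //.
  by rewrite subnKC.
rewrite -ltnNge => /ltnW le_lm.
have star_w : star (w N) = z N by rewrite -star_z // starK.
rewrite starM star_P (star_exp starM starK) star_w.
rewrite (h_Z_jacobi_jacobi_W mulrZ p_gt0 p_lt1 N_gt0 Q_add_ZW WZ_rel hD hZ h_ZW) //.
by rewrite subnKC // mulrA -exprD norm_constC mulnC -mulnDl subnK.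
Qed.
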